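(* Let $\mathbb H=\mathbb{R}\times\mathbb{R}_{>0}$ and define $L:\mathbb H\to\mathbb{R}_{>0}$ by $L(a,b)=\frac32b+a$ if $\frac ab\ge-1$ and $L(a,b)=-\frac{b^2}{2a}$ if $\frac ab\le-1$. Then for all $v_1,v_2\in\mathbb H$, $L(v_1+v_2)\le L(v_1)+L(v_2)$, and $L(kv)=kL(v)$ for all $v\in\mathbb H$ and $k>0$. *)

From Stdlib Require Import Reals.
Open Scope R_scope.

Definition inH (v : R * R) : Prop := 0 < snd v.

(* L(a,b) = 3/2 b + a if a/b >= -1, and -b^2/(2a) if a/b <= -1.
   For b > 0, a/b >= -1 iff a >= -b; at a = -b both branches give b/2. *)
Definition L (v : R * R) : R :=
  let (a, b) := v in
  if Rle_dec (- b) a then 3 / 2 * b + a else - (b ^ 2) / (2 * a).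

Definition vadd (v w : R * R) : R * R := (fst v + fst w, snd v + snd w).
Definition vscale (k : R) (v : R * R) : R * R := (k * fst v, k * snd v).

(* L is the supremum of the linear functionals lying below it on the half
   plane, and each point carries one touching L there: the functional
   (a, b) |-> a + 3/2 b at points with a >= -b, and (a, b) |-> r^2/2 a - r b
   with r = b0/a0 at a point (a0, b0) with a0 < -b0.  Evaluating the
   functional that touches L at v1 + v2 gives subadditivity; homogeneity
   holds because both the branch condition and both branches are
   homogeneous in (a, b). *)
From Stdlib Require Import Reals Lra Psatz.
Open Scope R_scope.

Lemma L_affine (a b : R) : - b <= a -> L (a, b) = 3 / 2 * b + a.
Proof. intros Hab; unfold L; destruct (Rle_dec (- b) a); [reflexivity|lra]. Qed.

Lemma L_quadratic (a b : R) : a < - b -> L (a, b) = - (b ^ 2) / (2 * a).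
Proof. intros Hab; unfold L; destruct (Rle_dec (- b) a); [lra|reflexivity]. Qed.

(* Here [a < 0], so clearing the denominator of [L (a, b)] flips the inequality. *)
Lemma L_quadratic_ge (a b y : R) : 0 < b -> a < - b ->
  - (b ^ 2) <= 2 * a * y -> y <= L (a, b).
Proof.
  intros Hb Hab Hy; rewrite (L_quadratic a b Hab).
  apply Rmult_le_reg_l with (- (2 * a)); [lra|].
  replace (- (2 * a) * (- b ^ 2 / (2 * a))) with (b ^ 2) by (field; lra).
  lra.
Qed.

Definition supports (f : R * R -> R) (P : R * R -> Prop) (al be : R) (v : R * R)
  : Prop :=
  al * fst v + be * snd v = f v /\
  forall w, P w -> al * fst w + be * snd w <= f w.

Lemma subadditive_of_supports (f : R * R -> R) (P : R * R -> Prop) :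
  (forall v w, P v -> P w -> P (vadd v w)) ->
  (forall v, P v -> exists al be, supports f P al be v) ->
  forall v w, P v -> P w -> f (vadd v w) <= f v + f w.
Proof.
  intros Hadd Hsupp v w Hv Hw.
  destruct (Hsupp (vadd v w) (Hadd v w Hv Hw)) as [al [be [Htouch Hbelow]]].
  rewrite <- Htouch; unfold vadd; simpl.
  pose proof (Hbelow v Hv); pose proof (Hbelow w Hw); lra.
Qed.

Lemma L_supports_affine (p q : R) : - q <= p -> supports L inH 1 (3 / 2) (p, q).
Proof.
  intros Hpq; split; cbn [fst snd].
  - rewrite (L_affine p q Hpq); lra.
  - intros [a b] Hb; unfold inH in Hb; cbn [fst snd] in *.
    destruct (Rle_dec (- b) a) as [Hab|Hab].
    + rewrite (L_affine a b Hab); lra.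
    + (* 2 a (a + 3/2 b) + b^2 = (2a + b)(a + b), a product of two negatives *)
      apply L_quadratic_ge; nra.
Qed.

Lemma L_supports_quadratic (p q : R) : 0 < q -> p < - q ->
  supports L inH ((q / p) ^ 2 / 2) (- (q / p)) (p, q).
Proof.
  intros Hq Hpq.
  set (r := q / p).
  assert (Hrp : r * p = q) by (unfold r; field; lra).
  assert (Hr : -1 <= r < 0) by (split; nra).
  split; cbn [fst snd].
  - rewrite (L_quadratic p q Hpq), <- Hrp; field; lra.
  - intros [a b] Hb; unfold inH in Hb; cbn [fst snd] in *.
    destruct (Rle_dec (- b) a) as [Hab|Hab].
    + (* the gap is (1 - r^2/2)(a + b) + b (1 + r)^2 / 2 *)
      rewrite (L_affine a b Hab).
      assert (0 <= (1 - r ^ 2 / 2) * (a + b)) by (apply Rmult_le_pos; nra).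
      assert (0 <= b * (1 + r) ^ 2) by (apply Rmult_le_pos; nra).
      nra.
    + (* 2 a (r^2/2 a - r b) + b^2 = (b - r a)^2 *)
      apply L_quadratic_ge; [lra | lra |].
      pose proof (pow2_ge_0 (b - r * a)); nra.
Qed.

Lemma L_supported (v : R * R) : inH v -> exists al be, supports L inH al be v.
Proof.
  destruct v as [p q]; unfold inH; cbn [snd]; intros Hq.
  destruct (Rle_dec (- q) p) as [Hpq|Hpq].
  - exists 1, (3 / 2); exact (L_supports_affine p q Hpq).
  - eexists; eexists; apply L_supports_quadratic; lra.
Qed.

Lemma L_subadditive (v w : R * R) : inH v -> inH w ->
  L (vadd v w) <= L v + L w.
Proof.
  apply subadditive_of_supports; [|exact L_supported].
  intros [a b] [c d]; unfold inH, vadd; simpl; lra.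
Qed.

Lemma L_homogeneous (v : R * R) (k : R) : inH v -> 0 < k ->
  L (vscale k v) = k * L v.
Proof.
  destruct v as [a b]; unfold inH, vscale; cbn [fst snd]; intros Hb Hk.
  destruct (Rle_dec (- b) a) as [Hab|Hab].
  - rewrite (L_affine a b Hab), L_affine by nra; ring.
  - rewrite (L_quadratic a b), L_quadratic by nra; field; nra.
Qed.

Theorem lemma5p3 :
  (forall v1 v2 : R * R, inH v1 -> inH v2 ->
     L (vadd v1 v2) <= L v1 + L v2) /\
  (forall (v : R * R) (k : R), inH v -> 0 < k ->
     L (vscale k v) = k * L v).
Proof. split; [exact L_subadditive | exact L_homogeneous]. Qed.
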